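(* Consider the discrete-time system $x_{k+1}=A_kx_k+b_ku_k$, $y_k=c_kx_k$ ($k\in\mathbb{Z}$) with $A_k\in\mathbb{R}^{n\times n}$, $b_k\in\mathbb{R}^{n\times1}$, $c_k\in\mathbb{R}^{1\times n}$. If the system is completely controllable, completely observable and $c_k\operatorname{adj}(A_k)b_k\neq0$ for every $k\in\mathbb{Z}$, then there exists a linear time-varying output-feedback controller of the form $u_k=F_ky_k$ (with scalars $F_k$) that steers any initial state at any time to the origin in $2(n^4+n^3+n^2)$ steps.
   Context: Complete controllability: for every $k\in\mathbb{Z}$ and every $\xi_s,\xi_f\in\mathbb{R}^n$ there are controls $u_k,\dots,u_{k+n-1}$ with $x_k=\xi_s\Rightarrow x_{k+n}=\xi_f$. Complete observability: for every $k\in\mathbb{Z}$ and all controls $u_k,\dots,u_{k+n-2}$, $x_k$ is uniquely determined by $y_k,\dots,y_{k+n-1}$. $\operatorname{adj}(A)$ is the adjugate of $A$ (so $A\operatorname{adj}(A)=\det(A)I$). Under $u_k=F_ky_k$ the closed-loop dynamics are $x_{k+1}=(A_k+F_kb_kc_k)x_k$. *)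

From HB Require Import structures.
From mathcomp Require Import all_boot all_order all_algebra.
From mathcomp Require Import reals.
Set Implicit Arguments. Unset Strict Implicit. Unset Printing Implicit Defensive.
Import Order.TTheory GRing.Theory Num.Theory.
Local Open Scope ring_scope.

Section Sys.
Variables (R : realType) (n : nat).
Variables (A : int -> 'M[R]_n) (b : int -> 'cV[R]_n) (c : int -> 'rV[R]_n).

Fixpoint state (u : int -> R) (k0 : int) (x0 : 'cV[R]_n) (m : nat) : 'cV[R]_n :=
  match m with
  | 0 => x0
  | m'.+1 => let k := k0 + m'%:Z in
             A k *m state u k0 x0 m' + u k *: b k
  end.

Definition output (u : int -> R) (k0 : int) (x0 : 'cV[R]_n) (m : nat) : R :=
  (c (k0 + m%:Z) *m state u k0 x0 m) 0 0.

Definition completely_controllable : Prop :=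
  forall (k : int) (xs xf : 'cV[R]_n),
    exists u : int -> R, state u k xs n = xf.

Definition completely_observable : Prop :=
  forall (k : int) (u : int -> R) (x x' : 'cV[R]_n),
    (forall i : nat, (i < n)%N -> output u k x i = output u k x' i) -> x = x'.

(* closed loop x_{k+1} = (A_k + F_k b_k c_k) x_k under u_k = F_k y_k *)
Fixpoint cl_state (F : int -> R) (k0 : int) (x0 : 'cV[R]_n) (m : nat) : 'cV[R]_n :=
  match m with
  | 0 => x0
  | m'.+1 => let k := k0 + m'%:Z in
             (A k + F k *: (b k *m c k)) *m cl_state F k0 x0 m'
  end.

End Sys.

From HB Require Import structures.
From mathcomp Require Import all_boot all_order all_algebra.
From mathcomp Require Import reals.
From mathcomp Require boolp.
From mathcomp Require Import zify.
Import Order.TTheory GRing.Theory Num.Theory.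
Local Open Scope ring_scope.
Set Implicit Arguments. Unset Strict Implicit. Unset Printing Implicit Defensive.

(* For every choice of gains the closed-loop
   state at time [j + 1] lies in [reach (j + 1)] = [A_j (reach j)], plus the line
   of [b_j] when [c_j] does not vanish on [reach j] (the feedback is then active
   at [j]); generic gains avoid any finite set of hyperplanes meeting it.  Since
   [c_j adj(A_j) b_j <> 0], the kernel of [A_j] lies in the line of
   [adj(A_j) b_j], on which [c_j] does not vanish, and [b_j] is outside the range
   of a singular [A_j]; so [dim (reach j)] never decreases and is constant on
   some window [[r, r + n]] with [r <= n^2].  On such a window, observability and
   controllability force [dim (reach r)] to be the number of active times, and
   the states that inputs at active times alone drive to [0] by time [r + n] form
   a funnel of subspaces from [reach r] down to [0], losing one dimension at each
   active time.  Generic earlier gains keep [c_j x_j <> 0] at active times, so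
   the gain there can cancel the component of [A_j x_j] along [b_j] and keep the
   state in the funnel: one state reaches [0] in [n^2 + n] steps.  Killing one
   column at a time lowers the rank of the transition matrix, so
   [L = n^4 + n^3 + n^2 >= n (n^2 + n)] steps annihilate all states, and gains
   chosen blockwise on [[q L, (q + 1) L)] work from every initial time within
   [2 L] steps. *)

Lemma mx11_neq0 (R : nzRingType) (M : 'M[R]_1) : (M != 0) = (M 0 0 != 0).
Proof.
congr negb; apply/eqP/eqP => [->|M00]; first by rewrite mxE.
by apply/matrixP => i j; rewrite !ord1 M00 mxE.
Qed.

Lemma exists_notin (R : numFieldType) (s : seq R) : exists x, x \notin s.
Proof.
have le_sum v : v \in s -> `|v| <= \sum_(u <- s) `|u|.
  move=> vs; rewrite (big_rem v vs) /= lerDl sumr_ge0 // => u _.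
exists (1 + \sum_(u <- s) `|u|); apply/negP => /le_sum.
by rewrite ger0_norm ?addr_ge0 ?sumr_ge0 // gerDr ler10.
Qed.

Lemma exists_gain_nonvanishing (R : numFieldType) (V : vectType R)
    (l : seq 'Hom(V, 'M[R]_1)) (v w : V) :
  exists f : R, forall phi, phi \in l ->
    (phi v != 0) || (phi w != 0) -> phi (v + f *: w) != 0.
Proof.
have [f f_notin] :=
  exists_notin [seq - phi v 0 0 / phi w 0 0 | phi : 'Hom(V, 'M[R]_1) <- l].
exists f => phi phi_l; rewrite !mx11_neq0 linearD linearZ !mxE /=.
have [w0 | w_neq0] := eqVneq (phi w 0 0) 0 => /=; first by rewrite orbF w0 mulr0 addr0.
move=> _; apply: contra f_notin => /eqP sum0; apply/mapP; exists phi => //.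
by rewrite -[f](mulfK w_neq0) -(addKr (phi v 0 0) (f * _)) sum0 addr0 mulNr.
Qed.

Lemma limg_sub_lker (K : fieldType) (uT vT wT : vectType K)
    (f : 'Hom(uT, vT)) (g : 'Hom(vT, wT)) (U : {vspace uT}) :
  (f @: U <= lker g)%VS = (U <= lker (g \o f))%VS.
Proof. by rewrite !lkerE limg_comp. Qed.

Lemma nondecreasing_stall (f : nat -> nat) N p :
    {homo f : i j / (i <= j)%N} -> (forall i, (f i <= N)%N) ->
  exists2 k, (k <= N)%N & f (k * p)%N = f (k * p + p)%N.
Proof.
move=> f_mono f_le.
have [/existsP[k /eqP stall] | /existsPn nostall] :=
  boolP [exists k : 'I_N.+1, f (k * p)%N == f (k * p + p)%N].
  by exists k => //; rewrite -ltnS ltn_ord.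
have grow k : (k <= N.+1)%N -> (k <= f (k * p))%N.
  elim: k => [|k IH] k_le //; apply: leq_ltn_trans (IH (ltnW k_le)) _.
  by rewrite mulSn addnC ltn_neqAle f_mono ?leq_addr // andbT (nostall (Ordinal k_le)).
by have := leq_trans (grow _ (leqnn _)) (f_le (N.+1 * p)); rewrite ltnn.
Qed.

Lemma mxrank_mul_col_ker (F : fieldType) n (P Q : 'M[F]_n) j :
  col j P != 0 -> Q *m col j P = 0 -> (\rank (Q *m P) < \rank P)%N.
Proof.
move=> Pj_neq0 QPj0.
have Pj_cap : ((col j P)^T <= P^T :&: kermx Q^T)%MS.
  rewrite sub_capmx tr_col row_sub /=; apply/sub_kermxP.
  by rewrite -tr_col -trmx_mul QPj0 trmx0.
have cap_gt0 : (0 < \rank (P^T :&: kermx Q^T))%N.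
  by apply: leq_trans (mxrankS Pj_cap); rewrite rank_rV trmx_eq0 Pj_neq0.
rewrite -mxrank_tr trmx_mul -[\rank P]mxrank_tr -(mxrank_mul_ker P^T Q^T).
by rewrite -addn1 leq_add2l.
Qed.

Section AdjugateCondition.
Variables (F : fieldType) (n : nat).
Implicit Types (A : 'M[F]_n) (y : 'cV[F]_n).

Lemma adj_neq0_rank A : \adj A != 0 -> (n.-1 <= \rank A)%N.
Proof.
case: n A => [|n'] A //= adj_neq0.
have /existsP[i /existsP[j]] : [exists i, exists j, \adj A i j != 0].
  apply: contraNT adj_neq0 => /existsPn adj0; apply/eqP/matrixP => i j.
  by move: (adj0 i) => /existsPn/(_ j); rewrite negbK => /eqP ->; rewrite mxE.
rewrite mxE /cofactor mulf_eq0 negb_or => /andP[_ minor_neq0].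
have minor_unit : row' j (col' i A) \in unitmx by rewrite unitmxE unitfE.
rewrite -[X in (X <= _)%N](mxrank_unit minor_unit) row'Esub rowsubE col'Esub.
rewrite -[A in colsub _ A]mulmx1 -mulmx_colsub.
exact: leq_trans (mxrankM_maxr _ _) (mxrankM_maxl _ _).
Qed.

Variables (A : 'M[F]_n) (b : 'cV[F]_n) (c : 'rV[F]_n).
Hypothesis cadjb_neq0 : (c *m \adj A *m b) 0 0 != 0.

Lemma adjb_neq0 : \adj A *m b != 0.
Proof. by apply: contraNneq cadjb_neq0; rewrite -mulmxA => ->; rewrite mulmx0 mxE. Qed.

Lemma b_neq0 : b != 0.
Proof. by apply: contraNneq cadjb_neq0 => ->; rewrite mulmx0 mxE. Qed.

Lemma c_scale_adjb_eq0 k : c *m (k *: (\adj A *m b)) = 0 -> k = 0.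
Proof.
move/eqP; rewrite -scalemxAr scaler_eq0 mulmxA => /orP[/eqP // | /eqP cadjb0].
by move: cadjb_neq0; rewrite cadjb0 mxE eqxx.
Qed.

Lemma singular_mulmx_neq_b y : \det A = 0 -> A *m y != b.
Proof.
move=> detA0; apply: contraNneq cadjb_neq0 => <-.
by rewrite -!mulmxA (mulmxA (\adj A)) mul_adj_mx detA0 mul_scalar_mx scale0r mulmx0 mxE.
Qed.

Lemma singular_ker_adjb y : \det A = 0 -> A *m y = 0 -> y \in <[\adj A *m b]>%VS.
Proof.
move=> detA0 Ay0; set w := \adj A *m b.
have Aw0 : A *m w = 0 by rewrite mulmxA mul_mx_adj detA0 mul_scalar_mx scale0r.
have adj_neq0 : \adj A != 0 by apply: contraNneq adjb_neq0 => ->; rewrite mul0mx.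
have ker_sub (v : 'cV_n) : A *m v = 0 -> (v^T <= kermx A^T)%MS.
  by move=> Av0; apply/sub_kermxP; rewrite -trmx_mul Av0 trmx0.
have rank_ker : (\rank (kermx A^T) <= 1)%N.
  by rewrite mxrank_ker mxrank_tr; have := adj_neq0_rank adj_neq0; lia.
have rank_w : \rank w^T = 1%N by rewrite rank_rV trmx_eq0 adjb_neq0.
have /eqmxP ker_eq : (w^T == kermx A^T)%MS.
  rewrite -(mxrank_leqif_eq (ker_sub w Aw0)) rank_w eqn_leq rank_ker.
  by rewrite -rank_w mxrankS ?ker_sub.
have /submxP[D yD] : (y^T <= w^T)%MS by rewrite ker_eq ker_sub.
apply/vlineP; exists (D 0 0).
by rewrite -[y]trmxK yD {1}[D]mx11_scalar mul_scalar_mx linearZ /= trmxK.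
Qed.

Lemma mulmx_eq_scale_b y a : A *m y = a *: b -> y \in <[\adj A *m b]>%VS.
Proof.
move=> Ay; have [detA0 | detA_neq0] := eqVneq (\det A) 0.
  have a0 : a = 0.
    apply: contraTeq (singular_mulmx_neq_b (a^-1 *: y) detA0) => a_neq0.
    by rewrite negbK -[b in _ == b](scalerK a_neq0) -Ay scalemxAr.
  by apply: singular_ker_adjb detA0 _; rewrite Ay a0 scale0r.
apply/vlineP; exists ((\det A)^-1 * a).
by rewrite -scalerA scalemxAr -Ay mulmxA mul_adj_mx mul_scalar_mx scalerA mulVf // scale1r.
Qed.

End AdjugateCondition.

Section ClosedLoopTransition.
Variables (R : realType) (n : nat).
Variables (A : int -> 'M[R]_n) (b : int -> 'cV[R]_n) (c : int -> 'rV[R]_n).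
Implicit Types (F : int -> R) (x : 'cV[R]_n).

Fixpoint cl_trans F k0 m : 'M[R]_n :=
  if m is m'.+1 then
    let k := k0 + m'%:Z in (A k + F k *: (b k *m c k)) *m cl_trans F k0 m'
  else 1%:M.

Lemma cl_stateE F k0 x m : cl_state A b c F k0 x m = cl_trans F k0 m *m x.
Proof. by elim: m => [|m IH] /=; rewrite ?mul1mx // IH mulmxA. Qed.

Lemma cl_stateS F k0 x m (k := k0 + m%:Z) (z := cl_state A b c F k0 x m) :
  cl_state A b c F k0 x m.+1 = A k *m z + (F k * (c k *m z) 0 0) *: b k.
Proof.
rewrite /= mulmxDl -scalemxAl -mulmxA.
by rewrite {1}[c _ *m _]mx11_scalar mul_mx_scalar scalerA.
Qed.

Lemma cl_transD F k0 m1 m2 :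
  cl_trans F k0 (m1 + m2) = cl_trans F (k0 + m1%:Z) m2 *m cl_trans F k0 m1.
Proof.
elim: m2 => [|m2 IH]; first by rewrite addn0 mul1mx.
by rewrite addnS /= IH mulmxA PoszD addrA.
Qed.

Lemma eq_cl_trans F1 F2 k0 m :
    (forall i, (i < m)%N -> F1 (k0 + i%:Z) = F2 (k0 + i%:Z)) ->
  cl_trans F1 k0 m = cl_trans F2 k0 m.
Proof. by elim: m => [|m IH] //= eqF; rewrite eqF // IH // => i /ltnW/eqF. Qed.

Lemma eq_cl_state F1 F2 k0 x m :
    (forall i, (i < m)%N -> F1 (k0 + i%:Z) = F2 (k0 + i%:Z)) ->
  cl_state A b c F1 k0 x m = cl_state A b c F2 k0 x m.
Proof. by move=> eqF; rewrite !cl_stateE (eq_cl_trans eqF). Qed.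

Lemma cl_state_upd F k0 x m f (k := k0 + m%:Z) (z := cl_state A b c F k0 x m) :
  cl_state A b c [eta F with k |-> f] k0 x m.+1 = A k *m z + (f * (c k *m z) 0 0) *: b k.
Proof.
rewrite cl_stateS /= eqxx (eq_cl_state (F2 := F)) // => i i_lt /=.
by rewrite (inj_eq (addrI k0)) eqz_nat ltn_eqF.
Qed.

Lemma cl_trans_eq0_le F k0 m m' p (X : 'M[R]_(n, p)) : (m <= m')%N ->
  cl_trans F k0 m *m X = 0 -> cl_trans F k0 m' *m X = 0.
Proof. by move=> /subnKC <- X0; rewrite cl_transD -mulmxA X0 mulmx0. Qed.

Lemma cl_trans_glue L : (forall k0, exists F, cl_trans F k0 L = 0) ->
  exists F, forall k0, cl_trans F k0 (2 * L) = 0.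
Proof.
move=> block; have [L0 | L_gt0] := posnP L.
  by have [F] := block 0; rewrite L0 => F0; exists F => k0; rewrite muln0.
have [G G0] := boolp.choice (fun q : int => block (q * L%:Z)).
exists (fun k => G (k %/ L%:Z)%Z k) => k0.
have L_neq0 : L%:Z != 0 by rewrite eqz_nat -lt0n.
have mod_ge0 := modz_ge0 k0 L_neq0.
have mod_lt : (k0 %% L%:Z < L%:Z)%Z by rewrite ltz_pmod // ltz_nat.
pose a := (L - absz (k0 %% L%:Z)%Z)%N.
set q := (k0 %/ L%:Z)%Z + 1.
have k0a : k0 + a%:Z = q * L%:Z.
  have := divz_eq k0 L%:Z; rewrite /a -(gez0_abs mod_ge0) in mod_lt *; lia.
have -> : (2 * L = a + L + (L - a))%N by lia.
rewrite !cl_transD k0a.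
suff -> : cl_trans (fun k => G (k %/ L%:Z)%Z k) (q * L%:Z) L = 0.
  by rewrite mul0mx mulmx0.
rewrite -(G0 q); apply: eq_cl_trans => i i_lt.
by rewrite divzMDl // divz_small ?addr0 //; lia.
Qed.

Section SteerAll.
Variable T : nat.
Hypothesis steer_each : forall k0 (v : 'cV[R]_n), exists F, cl_trans F k0 T *m v = 0.

Lemma steer_rank rho k0 (P : 'M[R]_n) :
  (\rank P <= rho)%N -> exists F, cl_trans F k0 (rho * T) *m P = 0.
Proof.
elim: rho k0 P => [|rho IH] k0 P rankP.
  by exists (fun=> 0); move: rankP; rewrite leqn0 mxrank_eq0 => /eqP ->; rewrite mulmx0.
have [-> | P_neq0] := eqVneq P 0; first by exists (fun=> 0); rewrite mulmx0.
have [j Pj_neq0] : exists j, col j P != 0.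
  apply/existsP; apply: contraNT P_neq0 => /existsPn Pj0; apply/eqP/matrixP => i j.
  by move/negPn/eqP/matrixP/(_ i 0): (Pj0 j); rewrite !mxE.
have [F1 F1Pj] := steer_each k0 (col j P).
have [F2 F2P] := IH (k0 + T%:Z) (cl_trans F1 k0 T *m P)
  (leq_trans (mxrank_mul_col_ker Pj_neq0 F1Pj) rankP).
exists (fun k => if (k < k0 + T%:Z)%R then F1 k else F2 k).
rewrite mulSn cl_transD -mulmxA (eq_cl_trans (F2 := F1) (m := T)) => [|i i_lt]; last first.
  by rewrite ifT //; lia.
by rewrite (eq_cl_trans (F2 := F2)) // => i _; rewrite ifF //; lia.
Qed.

Lemma steer_all k0 : exists F, cl_trans F k0 (n * T) = 0.
Proof.
by have [F] := steer_rank k0 (rank_leq_row (1%:M : 'M[R]_n)); rewrite mulmx1; exists F.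
Qed.

End SteerAll.

End ClosedLoopTransition.

Section OpenLoop.
Variables (R : realType) (n : nat).
Variables (A : int -> 'M[R]_n) (b : int -> 'cV[R]_n) (c : int -> 'rV[R]_n).
Implicit Types (u : int -> R) (y : 'cV[R]_n).

Lemma state_zero_input k0 y m :
  state A b (fun=> 0) k0 y m = cl_state A b c (fun=> 0) k0 y m.
Proof. by elim: m => [|m IH] //=; rewrite IH scale0r addr0 scale0r addr0. Qed.

Lemma state_superpose u k0 y m :
  state A b u k0 y m = state A b (fun=> 0) k0 y m + state A b u k0 0 m.
Proof. by elim: m => [|m IH] /=; rewrite ?addr0 // IH mulmxDr scale0r addr0 addrA. Qed.

Lemma eq_state u1 u2 k0 y m :
    (forall i, (i < m)%N -> u1 (k0 + i%:Z) = u2 (k0 + i%:Z)) ->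
  state A b u1 k0 y m = state A b u2 k0 y m.
Proof. by elim: m => [|m IH] //= equ; rewrite equ // IH // => i /ltnW/equ. Qed.

Lemma stateSl u k0 y m :
  state A b u k0 y m.+1 = state A b u (k0 + 1) (A k0 *m y + u k0 *: b k0) m.
Proof.
elim: m => [|m IH]; first by rewrite /= !addr0.
set k := k0 + m.+1%:Z.
rewrite -[LHS]/(A k *m state A b u k0 y m.+1 + u k *: b k) IH /=.
by rewrite /k -addrA -PoszD add1n.
Qed.

End OpenLoop.

Section SingleStateSteering.
Variables (R : realType) (n : nat).
Variables (A : int -> 'M[R]_n) (b : int -> 'cV[R]_n) (c : int -> 'rV[R]_n).
Hypothesis cadjb_neq0 : forall k, (c k *m \adj (A k) *m b k) 0 0 != 0.
Variables (s : int) (x : 'cV[R]_n).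

Local Notation tm j := (s + (j : nat)%:Z).
Local Notation z F m := (cl_state A b c F s x m).
Local Notation adjb j := (\adj (A (tm j)) *m b (tm j)).

Definition Alin j : 'End('cV[R]_n) := linfun (mulmx (A (tm j))).
Definition clin j : 'Hom('cV[R]_n, 'M[R]_1) := linfun (mulmx (c (tm j))).

Lemma AlinE j y : Alin j y = A (tm j) *m y. Proof. exact: lfunE. Qed.
Lemma clinE j y : clin j y = c (tm j) *m y. Proof. exact: lfunE. Qed.

Lemma tmD j m : tm j + m%:Z = tm (j + m).
Proof. by rewrite -addrA -PoszD. Qed.

Lemma eq_tm i j : (tm i == tm j) = (i == j).
Proof. by rewrite (inj_eq (addrI s)) eqz_nat. Qed.

Fixpoint reach m : {vspace 'cV[R]_n} :=
  if m is m'.+1 then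
    (Alin m' @: reach m' +
       if ~~ (reach m' <= lker (clin m'))%VS then <[b (tm m')]> else 0)%VS
  else <[x]>%VS.

Definition active j := ~~ (reach j <= lker (clin j))%VS.
Definition input_space j := if active j then <[b (tm j)]>%VS else 0%VS.

Lemma reachS j : reach j.+1 = (Alin j @: reach j + input_space j)%VS.
Proof. by []. Qed.

Lemma passive_c_eq0 j y : ~~ active j -> y \in reach j -> c (tm j) *m y = 0.
Proof. by rewrite negbK => /subvP sub /sub; rewrite memv_ker clinE => /eqP. Qed.

Lemma reach_A j y : y \in reach j -> A (tm j) *m y \in reach j.+1.
Proof. by move=> y_in; rewrite reachS (subvP (addvSl _ _)) // -AlinE memv_img. Qed.

Lemma active_b_in_reach j : active j -> b (tm j) \in reach j.+1.
Proof. by move=> act; rewrite reachS /input_space act (subvP (addvSr _ _)) ?memv_line. Qed.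

Lemma cl_state_in_reach F m : z F m \in reach m.
Proof.
elim: m => [|m IH]; first exact: memv_line.
rewrite cl_stateS reachS /input_space; apply: memv_add; first by rewrite -AlinE memv_img.
case: ifP => act; first by rewrite memvZ // memv_line.
by rewrite (passive_c_eq0 (negbT act) IH) mxE mulr0 scale0r mem0v.
Qed.

Lemma lker_Alin_sub j : (lker (Alin j) <= <[adjb j]>)%VS.
Proof.
apply/subvP => y; rewrite memv_ker AlinE => /eqP Ay0.
by apply: (mulmx_eq_scale_b (cadjb_neq0 (tm j)) (a := 0)); rewrite Ay0 scale0r.
Qed.

Lemma dim_cap_lker_Alin j U : (\dim (U :&: lker (Alin j)) <= 1)%N.
Proof.
apply: leq_trans (dimvS (subv_trans (capvSr _ _) (lker_Alin_sub j))) _.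
by rewrite dim_vline leq_b1.
Qed.

Lemma lker_Alin_eq0 j : \det (A (tm j)) != 0 -> lker (Alin j) = 0%VS.
Proof.
move=> det_neq0; have A_unit : A (tm j) \in unitmx by rewrite unitmxE unitfE.
apply/eqP; rewrite -subv0; apply/subvP => y; rewrite memv_ker AlinE memv0 => /eqP Ay0.
by rewrite -[y](mulKmx A_unit) Ay0 mulmx0.
Qed.

Lemma passive_cap_lker j U :
  ~~ active j -> (U <= reach j)%VS -> (U :&: lker (Alin j) = 0)%VS.
Proof.
move=> pas U_sub; apply/eqP; rewrite -subv0; apply/subvP => y.
rewrite memv_cap memv0 => /andP[/(subvP U_sub) y_in /(subvP (lker_Alin_sub j))].
case/vlineP=> k y_eq; move: y_in; rewrite y_eq => /(passive_c_eq0 pas).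
by move/(c_scale_adjb_eq0 (cadjb_neq0 _)) ->; rewrite scale0r.
Qed.

Lemma singular_img_cap_b j U :
  \det (A (tm j)) = 0 -> (Alin j @: U :&: <[b (tm j)]> = 0)%VS.
Proof.
move=> det0; apply/eqP; rewrite -subv0; apply/subvP => v.
rewrite memv_cap memv0 => /andP[/memv_imgP[y _ ->] /vlineP[a]]; rewrite AlinE => Ay.
have [a0 | a_neq0] := eqVneq a 0; first by rewrite Ay a0 scale0r.
have := singular_mulmx_neq_b (cadjb_neq0 (tm j)) (a^-1 *: y) det0.
by rewrite -scalemxAr Ay scalerA mulVf // scale1r eqxx.
Qed.

Lemma dim_reachS j : (\dim (reach j) <= \dim (reach j.+1))%N.
Proof.
have dim_img := limg_ker_dim (Alin j) (reach j).
rewrite reachS /input_space; case: ifP => act; last first.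
  by rewrite addv0 limg_dim_eq // passive_cap_lker ?act.
have [det0 | det_neq0] := eqVneq (\det (A (tm j))) 0.
  rewrite dimv_disjoint_sum ?singular_img_cap_b // dim_vline (b_neq0 (cadjb_neq0 _)).
  by rewrite -{1}dim_img addnC leq_add2l dim_cap_lker_Alin.
by rewrite (leq_trans _ (dimvS (addvSl _ _))) // limg_dim_eq // lker_Alin_eq0 // capv0.
Qed.

Lemma dim_reach_mono : {homo (fun m => \dim (reach m)) : i j / (i <= j)%N}.
Proof. by apply: homo_leq dim_reachS; [exact: leqnn | exact: leq_trans]. Qed.

Lemma dim_reach_le m : (\dim (reach m) <= n)%N.
Proof. by rewrite (leq_trans (dimvS (subvf _))) // dimvf dim_matrix mulr1. Qed.

Lemma reach_stall :
  exists2 k, (k <= n)%N & \dim (reach (k * n)) = \dim (reach (k * n + n)).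
Proof. exact: nondecreasing_stall dim_reach_mono dim_reach_le. Qed.

Lemma reach_generic m (l : seq 'Hom('cV[R]_n, 'M[R]_1)) : exists F,
  forall phi, phi \in l -> ~~ (reach m <= lker phi)%VS -> phi (z F m) != 0.
Proof.
elim: m l => [|m IH] l; first by exists (fun=> 0) => phi _; rewrite -memvE memv_ker.
have [F genF] := IH (clin m :: [seq (phi \o Alin m)%VF | phi <- l]).
set zm := z F m.
have [f genf] :=
  exists_gain_nonvanishing l (A (tm m) *m zm) ((c (tm m) *m zm) 0 0 *: b (tm m)).
exists [eta F with tm m |-> f] => phi phi_l.
rewrite cl_state_upd -/zm -scalerA reachS subv_add negb_and => phi_nz.
apply: genf => //; case/orP: phi_nz => [img_nz | in_nz].
  have := genF (phi \o Alin m)%VF; rewrite comp_lfunE AlinE => -> //.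
    by rewrite inE (map_f (fun phi => phi \o Alin m)%VF) ?orbT.
  by rewrite -limg_sub_lker.
move: in_nz; rewrite /input_space; case: ifP => [act|_]; last by rewrite sub0v.
rewrite -memvE memv_ker => phib_nz.
have cz_nz : clin m zm != 0 by apply: (genF _ _ act); rewrite inE eqxx.
rewrite clinE mx11_neq0 in cz_nz.
by rewrite linearZ scaler_eq0 negb_or cz_nz phib_nz orbT.
Qed.

Lemma reach_cl_state_zero j m y :
  y \in reach j -> cl_state A b c (fun=> 0) (tm j) y m \in reach (j + m).
Proof.
elim: m => [|m IH] y_in /=; first by rewrite addn0.
by rewrite scale0r addr0 tmD addnS reach_A ?IH.
Qed.

Lemma adjb_in_reach j :
  active j -> \dim (reach j) = \dim (reach j.+1) -> adjb j \in reach j.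
Proof.
move=> act dim_eq; apply: contraTT (active_b_in_reach act) => adjb_notin.
have line_cap y : y \in reach j -> y \in <[adjb j]>%VS -> y = 0.
  move=> y_in /vlineP[k y_eq]; have [k0 | k_neq0] := eqVneq k 0.
    by rewrite y_eq k0 scale0r.
  by move: adjb_notin; rewrite -(scalerK k_neq0 (adjb j)) -y_eq (memvZ _ y_in).
have cap0 : (reach j :&: lker (Alin j) = 0)%VS.
  apply/eqP; rewrite -subv0; apply/subvP => y; rewrite memv_cap memv0.
  by case/andP=> y_in /(subvP (lker_Alin_sub j)) /(line_cap _ y_in) ->.
have img_eq : (Alin j @: reach j)%VS = reach j.+1.
  apply/eqP; rewrite eqEdim limg_dim_eq // dim_eq leqnn andbT reachS.
  exact: addvSl.
rewrite -img_eq; apply/memv_imgP => -[y y_in]; rewrite AlinE => /esym Ay.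
have /(line_cap _ y_in) y0 : y \in <[adjb j]>%VS.
  by apply: (mulmx_eq_scale_b (cadjb_neq0 _) (a := 1)); rewrite Ay scale1r.
move: Ay; rewrite y0 mulmx0 => b0.
by move: (b_neq0 (cadjb_neq0 (tm j))); rewrite -b0 eqxx.
Qed.

Lemma dim_Alin_sub j X U : (X <= reach j)%VS ->
  (Alin j @: X <= U + input_space j)%VS -> (\dim X <= active j + \dim U)%N.
Proof.
move=> X_sub img_sub; rewrite -(limg_ker_dim (Alin j) X).
have dim_b : \dim <[b (tm j)]> = 1%N by rewrite dim_vline (b_neq0 (cadjb_neq0 _)).
have dim_add_line : (\dim (U + <[b (tm j)]>) <= \dim U + 1)%N.
  by rewrite -[X in (_ <= _ + X)%N]dim_b; exact: (dimv_add_leqif _ _).1.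
move: img_sub; rewrite /input_space; case: ifP => act img_sub; last first.
  by rewrite passive_cap_lker ?act // dimv0 add0n dimvS // -(addv0 U).
have [det0 | det_neq0] := eqVneq (\det (A (tm j))) 0; last first.
  rewrite lker_Alin_eq0 // capv0 dimv0 add0n addnC.
  exact: leq_trans (dimvS img_sub) dim_add_line.
apply: leq_add; first exact: dim_cap_lker_Alin.
rewrite -(leq_add2r 1) -[X in (_ + X <= _)%N]dim_b.
rewrite -dimv_disjoint_sum ?singular_img_cap_b //.
by apply: leq_trans dim_add_line; apply: dimvS; rewrite subv_add img_sub addvSr.
Qed.

Fixpoint nullable m j : {vspace 'cV[R]_n} :=
  if m is m'.+1 then (Alin j @^-1: (nullable m' j.+1 + input_space j))%VS else 0%VS.

Definition nactive j m := (\sum_(i < m) active (j + i))%N.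

Lemma nactiveS j m : nactive j m.+1 = (active j + nactive j.+1 m)%N.
Proof.
rewrite /nactive big_ord_recl addn0; congr (_ + _)%N.
by apply: eq_bigr => i _; rewrite lift0 addnS addSn.
Qed.

Lemma Alin_nullable j m y : y \in nullable m.+1 j -> y \in reach j ->
  A (tm j) *m y \in (nullable m j.+1 :&: reach j.+1 + input_space j)%VS.
Proof.
rewrite /= -memv_preim AlinE => /memv_addP[v v_in [e e_in Ay_eq]] y_in.
rewrite Ay_eq memv_add // memv_cap v_in.
have -> : v = A (tm j) *m y - e by rewrite Ay_eq addrK.
rewrite memvB ?reach_A //; move: e_in; rewrite {1}/input_space.
case: ifP => [act /vlineP[a ->] | _ /(subvP (sub0v _)) //].
by apply/memvZ/(subvP (addvSr _ _)); apply: memv_line.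
Qed.

Lemma dim_nullable_reach m j : (\dim (nullable m j :&: reach j) <= nactive j m)%N.
Proof.
elim: m j => [|m IH] j; first by rewrite /= cap0v dimv0.
rewrite nactiveS (leq_trans _ (leq_add (leqnn _) (IH j.+1))) // dim_Alin_sub ?capvSr //.
apply/subvP => v /memv_imgP[y]; rewrite memv_cap => /andP[y_null y_in] ->.
by rewrite AlinE Alin_nullable.
Qed.

Lemma steer_nullable m j y u :
    (forall i, (i < m)%N -> ~~ active (j + i) -> u (tm (j + i)) = 0) ->
  state A b u (tm j) y m = 0 -> y \in nullable m j.
Proof.
elim: m j y => [|m IH] j y u_pas; first by move=> /= ->; rewrite mem0v.
rewrite stateSl tmD addn1 => /IH null_next /=; rewrite -memv_preim AlinE.
have /null_next :
    forall i, (i < m)%N -> ~~ active (j.+1 + i) -> u (tm (j.+1 + i)) = 0.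
  by move=> i i_lt; rewrite addSnnS; apply: u_pas.
rewrite /input_space; case: ifP => act Ayu_in.
  rewrite -[A _ *m y](addrK (u (tm j) *: b (tm j))) memv_add //.
  by rewrite memvN memvZ // memv_line.
have u0 : u (tm j) = 0 by have := u_pas 0%N; rewrite addn0 act; apply.
by move: Ayu_in; rewrite u0 scale0r !addr0 addv0.
Qed.

Definition passive_space j := if active j then 0%VS else <[b (tm j)]>%VS.

Lemma dim_passive_space j : \dim (passive_space j) = ~~ active j.
Proof.
rewrite /passive_space; case: (active j); first by rewrite dimv0.
by rewrite dim_vline (b_neq0 (cadjb_neq0 _)).
Qed.

Fixpoint input_reach (B : nat -> {vspace 'cV[R]_n}) j m : {vspace 'cV[R]_n} :=
  if m is m'.+1 then (Alin (j + m')%N @: input_reach B j m' + B (j + m')%N)%VS else 0%VS.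

Lemma dim_input_reach B j m :
  (\dim (input_reach B j m) <= \sum_(i < m) \dim (B (j + i)))%N.
Proof.
elim: m => [|m IH] /=; first by rewrite dimv0.
rewrite big_ord_recr /=; apply: leq_trans (dimv_add_leqif _ _).1 _.
rewrite leq_add2r (leq_trans _ IH) //.
by rewrite -(limg_ker_dim (Alin (j + m)) (input_reach B j m)) leq_addl.
Qed.

Lemma input_reach_sub_reach j m : (input_reach input_space j m <= reach (j + m))%VS.
Proof.
elim: m => [|m IH] /=; first exact: sub0v.
by rewrite addnS reachS subv_add addvSr andbT (subv_trans (limgS _ IH)) ?addvSl.
Qed.

Lemma state_in_input_reach j m u : state A b u (tm j) 0 m \in
  (input_reach input_space j m + input_reach passive_space j m)%VS.
Proof.
elim: m => [|m IH] /=; first exact: mem0v.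
case/memv_addP: IH => v1 v1_in [v2 v2_in ->]; rewrite tmD mulmxDr -!AlinE.
have : u (tm (j + m)) *: b (tm (j + m)) \in
    (input_space (j + m) + passive_space (j + m))%VS.
  by rewrite /input_space /passive_space; case: ifP; rewrite ?addv0 ?add0v memvZ ?memv_line.
case/memv_addP=> e1 e1_in [e2 e2_in ->].
by rewrite addrACA memv_add // memv_add // memv_img.
Qed.

Lemma steer_input_reach j m v : v \in input_reach input_space j m -> exists u,
  (forall i, (i < m)%N -> ~~ active (j + i) -> u (tm (j + i)) = 0) /\
  state A b u (tm j) 0 m = v.
Proof.
elim: m v => [|m IH] v /=; first by rewrite memv0 => /eqP ->; exists (fun=> 0).
case/memv_addP=> _ /memv_imgP[y y_in ->] [e e_in ->].
have [a [e_eq pas_a0]] : exists a, e = a *: b (tm (j + m)) /\ (~~ active (j + m) -> a = 0).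
  move: e_in; rewrite /input_space; case: ifP => [act /vlineP[a ->] | _].
    by exists a.
  by rewrite memv0 => /eqP ->; exists 0; rewrite scale0r.
have [u [u_pas state_u]] := IH y y_in.
exists [eta u with tm (j + m) |-> a]; split.
  move=> i; rewrite ltnS leq_eqVlt => /orP[/eqP -> | i_lt] /=; first by rewrite eqxx.
  by move=> pas; rewrite eq_tm eqn_add2l ltn_eqF //; apply: u_pas.
rewrite (@eq_state _ _ A b _ u) => [|i i_lt]; last first.
  by rewrite /= tmD eq_tm eqn_add2l ltn_eqF.
by rewrite /= tmD eqxx state_u AlinE e_eq.
Qed.

Hypothesis ctrl : completely_controllable A b.
Hypothesis obs : completely_observable A b c.

Section Window.
Variable r : nat.
Hypothesis dim_stall : \dim (reach r) = \dim (reach (r + n)).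

Local Notation Phi0 d := (cl_trans A b c (fun=> 0) (tm r) d).

Fixpoint silent d : {vspace 'cV[R]_n} :=
  if d is d'.+1 then
    (silent d' :&: if active (r + d') then
       lker (clin (r + d')%N \o linfun (mulmx (Phi0 d')))%VF else fullv)%VS
  else reach r.

Lemma dim_reach_le_silent d : (\dim (reach r) <= \dim (silent d) + nactive r d)%N.
Proof.
elim: d => [|d IH]; first by rewrite /nactive big_ord0 addn0.
rewrite /nactive big_ord_recr /= -/(nactive r d).
case: ifP => act /=; last by rewrite capvf addn0.
set g := (clin (r + d) \o linfun (mulmx (Phi0 d)))%VF.
have dim_img : (\dim (g @: silent d) <= 1)%N.
  by rewrite (leq_trans (dimvS (subvf _))) // dimvf dim_matrix.
rewrite -(limg_ker_dim g (silent d)) in IH; apply: leq_trans IH _.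
by rewrite -addnA leq_add2l addnC leq_add2l.
Qed.

Lemma silentP d y : y \in silent d -> y \in reach r /\
  forall i, (i < d)%N -> active (r + i) -> c (tm (r + i)) *m (Phi0 i *m y) = 0.
Proof.
elim: d => [|d IH] //=; rewrite memv_cap => /andP[/IH[y_in y_sil] y_ker].
split=> // i; rewrite ltnS leq_eqVlt => /orP[/eqP -> act | /y_sil //].
by move: y_ker; rewrite act memv_ker comp_lfunE !lfunE /= => /eqP.
Qed.

Lemma dim_reach_le_nactive : (\dim (reach r) <= nactive r n)%N.
Proof.
suff silent0 : silent n = 0%VS by have := dim_reach_le_silent n; rewrite silent0 dimv0.
apply/eqP; rewrite -subv0; apply/subvP => y /silentP[y_in y_sil]; rewrite memv0.
apply/eqP/(obs (k := tm r) (u := fun=> 0)) => i i_lt.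
rewrite /output !(state_zero_input _ _ c) !cl_stateE !mulmx0 [in RHS]mxE tmD.
case act: (active (r + i)); first by rewrite y_sil // mxE.
by rewrite -cl_stateE (passive_c_eq0 (negbT act) (reach_cl_state_zero _ y_in)) mxE.
Qed.

Lemma nactive_le_dim_input_reach :
  (nactive r n <= \dim (input_reach input_space r n))%N.
Proof.
have full : (fullv <= input_reach input_space r n + input_reach passive_space r n)%VS.
  by apply/subvP => v _; have [u <-] := ctrl (tm r) 0 v; apply: state_in_input_reach.
have := leq_trans (dimvS full) (dimv_add_leqif _ _).1.
rewrite dimvf dim_matrix mulr1 => n_le.
have split_n : (nactive r n + \sum_(i < n) \dim (passive_space (r + i)) = n)%N.
  rewrite /nactive -big_split /= -[n in RHS]card_ord -sum1_card.
  by apply: eq_bigr => i _; rewrite dim_passive_space; case: active.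
rewrite -(leq_add2r (\sum_(i < n) \dim (passive_space (r + i)))) split_n.
exact: leq_trans n_le (leq_add (leqnn _) (dim_input_reach _ _ _)).
Qed.

Lemma dim_reach_eq_nactive : \dim (reach r) = nactive r n.
Proof.
apply/eqP; rewrite eqn_leq dim_reach_le_nactive (leq_trans nactive_le_dim_input_reach) //.
by rewrite dim_stall dimvS // input_reach_sub_reach.
Qed.

Lemma input_reach_full : input_reach input_space r n = reach (r + n).
Proof.
apply/eqP; rewrite eqEdim input_reach_sub_reach -dim_stall dim_reach_eq_nactive.
exact: nactive_le_dim_input_reach.
Qed.

Lemma reach_sub_nullable : (reach r <= nullable n r)%VS.
Proof.
apply/subvP => y y_in.
have /steer_input_reach[u [u_pas state_u]] :
    - cl_state A b c (fun=> 0) (tm r) y n \in input_reach input_space r n.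
  by rewrite input_reach_full memvN reach_cl_state_zero.
apply: steer_nullable u_pas _.
by rewrite state_superpose state_u (state_zero_input _ _ c) subrr.
Qed.

Lemma dim_reach_window d : (d <= n)%N -> \dim (reach (r + d)) = \dim (reach r).
Proof.
move=> d_le; apply/eqP; rewrite eqn_leq (dim_reach_mono (leq_addr d r)) andbT dim_stall.
by rewrite dim_reach_mono // leq_add2l.
Qed.

Definition funnel d := (nullable (n - d) (r + d) :&: reach (r + d))%VS.

Lemma funnel0 : funnel 0 = reach r.
Proof. by rewrite /funnel subn0 addn0; apply/capv_idPr; exact: reach_sub_nullable. Qed.

Lemma funnel_step d y : (d < n)%N -> y \in funnel d ->
  A (tm (r + d)) *m y \in (funnel d.+1 + input_space (r + d))%VS.
Proof.
move=> d_lt; rewrite /funnel memv_cap -(subnSK d_lt) => /andP[y_null y_in].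
by rewrite addnS; apply: Alin_nullable.
Qed.

Definition funnel_proj d : 'End('cV[R]_n) :=
  if active (r + d) then (addv_pi1 (funnel d.+1) <[b (tm (r + d))]> \o Alin (r + d))%VF
  else Alin (r + d).

Lemma funnel_proj_mem d y : (d < n)%N -> y \in funnel d -> funnel_proj d y \in funnel d.+1.
Proof.
move=> d_lt y_in; rewrite /funnel_proj; case act: (active (r + d)).
  by rewrite comp_lfunE memv_pi1.
by have := funnel_step d_lt y_in; rewrite /input_space act addv0 AlinE.
Qed.

Lemma funnel_proj_sub d : (d < n)%N -> (funnel_proj d @: funnel d <= funnel d.+1)%VS.
Proof. by move=> d_lt; apply/subvP => v /memv_imgP[y y_in ->]; apply: funnel_proj_mem. Qed.

Lemma dim_funnel_proj_ker d : (d < n)%N ->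
  (\dim (funnel d :&: lker (funnel_proj d)) <= active (r + d))%N.
Proof.
move=> d_lt; case act: (active (r + d)); last first.
  by rewrite /funnel_proj act passive_cap_lker ?act ?capvSr // dimv0.
have ker_sub : (funnel d :&: lker (funnel_proj d) <= <[adjb (r + d)]>)%VS.
  apply/subvP => y; rewrite memv_cap memv_ker /funnel_proj act comp_lfunE AlinE.
  case/andP=> y_in /eqP pi1_0; have := funnel_step d_lt y_in.
  rewrite /input_space act => /addv_pi1_pi2; rewrite pi1_0 add0r => pi2_eq.
  have /vlineP[a Ay] :=
    memv_pi2 (funnel d.+1) <[b (tm (r + d))]> (A (tm (r + d)) *m y).
  by apply: (mulmx_eq_scale_b (cadjb_neq0 _) (a := a)); rewrite -pi2_eq Ay.
by rewrite (leq_trans (dimvS ker_sub)) // dim_vline leq_b1.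
Qed.

Lemma nactive_funnel_step d : (d < n)%N ->
  nactive (r + d) (n - d) = (active (r + d) + nactive (r + d.+1) (n - d.+1))%N.
Proof. by move=> d_lt; rewrite -(subnSK d_lt) nactiveS addnS. Qed.

Lemma nactive_le_dim_funnel_img d : (d < n)%N ->
    (nactive (r + d) (n - d) <= \dim (funnel d))%N ->
  (nactive (r + d.+1) (n - d.+1) <= \dim (funnel_proj d @: funnel d))%N.
Proof.
move=> d_lt; rewrite (nactive_funnel_step d_lt) -(limg_ker_dim (funnel_proj d) (funnel d)).
move=> le_dim; rewrite -(leq_add2l (active (r + d))); apply: leq_trans le_dim _.
by rewrite leq_add2r dim_funnel_proj_ker.
Qed.

Lemma nactive_le_dim_funnel d : (d <= n)%N -> (nactive (r + d) (n - d) <= \dim (funnel d))%N.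
Proof.
elim: d => [|d IH] d_le; first by rewrite funnel0 subn0 addn0 dim_reach_eq_nactive.
apply: leq_trans (dimvS (funnel_proj_sub d_le)).
exact: nactive_le_dim_funnel_img (IH (ltnW d_le)).
Qed.

Lemma funnel_proj_img d : (d < n)%N -> (funnel_proj d @: funnel d)%VS = funnel d.+1.
Proof.
move=> d_lt; apply/eqP; rewrite eqEdim funnel_proj_sub //=.
apply: leq_trans (dim_nullable_reach (n - d.+1) (r + d.+1)) _.
exact: nactive_le_dim_funnel_img (nactive_le_dim_funnel (ltnW d_lt)).
Qed.

Lemma adjb_in_funnel d : (d < n)%N -> active (r + d) -> adjb (r + d) \in funnel d.
Proof.
move=> d_lt act; rewrite /funnel memv_cap; apply/andP; split.
  rewrite -(subnSK d_lt) /= -memv_preim AlinE mulmxA mul_mx_adj mul_scalar_mx /input_space act.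
  by rewrite -[_ *: _]add0r memv_add ?mem0v // memvZ ?memv_line.
by apply: adjb_in_reach act _; rewrite -addnS !dim_reach_window // ltnW.
Qed.

Lemma funnel_generic d (l : seq 'Hom('cV[R]_n, 'M[R]_1)) : (d <= n)%N -> exists F,
  z F (r + d) \in funnel d /\
  forall phi, phi \in l -> ~~ (funnel d <= lker phi)%VS -> phi (z F (r + d)) != 0.
Proof.
elim: d l => [|d IH] l d_lt.
  have [F genF] := reach_generic r l.
  by exists F; rewrite addn0 funnel0 cl_state_in_reach.
have [F [zF_in genF]] :=
  IH (clin (r + d) :: [seq (phi \o funnel_proj d)%VF | phi <- l]) (ltnW d_lt).
set zd := z F (r + d).
have cz_nz : active (r + d) -> (c (tm (r + d)) *m zd) 0 0 != 0.
  move=> act; rewrite -mx11_neq0 -clinE; apply: genF; first by rewrite inE eqxx.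
  apply/subvPn; exists (adjb (r + d)); first exact: adjb_in_funnel.
  by rewrite memv_ker clinE mx11_neq0 mulmxA cadjb_neq0.
have /vlineP[a pi2_eq] :=
  memv_pi2 (funnel d.+1) <[b (tm (r + d))]> (A (tm (r + d)) *m zd).
pose f := if active (r + d) then - a / (c (tm (r + d)) *m zd) 0 0 else 0.
exists [eta F with tm (r + d) |-> f].
have z_next : z [eta F with tm (r + d) |-> f] (r + d.+1) = funnel_proj d zd.
  rewrite addnS cl_state_upd -/zd /f /funnel_proj; case act: (active (r + d)); last first.
    by rewrite mul0r scale0r addr0 AlinE.
  have := funnel_step d_lt zF_in; rewrite /input_space act => /addv_pi1_pi2 Azd_eq.
  rewrite comp_lfunE AlinE divfK ?cz_nz // scaleNr -pi2_eq.
  by apply/eqP; rewrite subr_eq Azd_eq.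
split; first by rewrite z_next funnel_proj_mem.
move=> phi phi_l; rewrite -(funnel_proj_img d_lt) limg_sub_lker z_next => img_nz.
have := genF (phi \o funnel_proj d)%VF; rewrite comp_lfunE; apply=> //.
by rewrite inE (map_f (fun phi => phi \o funnel_proj d)%VF) ?orbT.
Qed.

Lemma steer_window : exists F, z F (r + n) = 0.
Proof.
have [F [zF_in _]] := funnel_generic [::] (leqnn n); exists F.
by move: zF_in; rewrite /funnel subnn /= cap0v memv0 => /eqP.
Qed.

End Window.

Lemma steer_state : exists F, z F (n * n + n) = 0.
Proof.
have [k k_le stall] := reach_stall; have [F zF0] := steer_window stall.
exists F; move: zF0; rewrite !cl_stateE; apply: cl_trans_eq0_le.
by rewrite leq_add2r leq_mul2r k_le orbT.
Qed.

End SingleStateSteering.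

Theorem theorem5 (R : realType) (n : nat)
    (A : int -> 'M[R]_n) (b : int -> 'cV[R]_n) (c : int -> 'rV[R]_n) :
  completely_controllable A b ->
  completely_observable A b c ->
  (forall k : int, (c k *m \adj (A k) *m b k) 0 0 != 0) ->
  exists F : int -> R,
    forall (k0 : int) (x0 : 'cV[R]_n),
      cl_state A b c F k0 x0 (2 * (n ^ 4 + n ^ 3 + n ^ 2))%N = 0.
Proof.
move=> ctrl obs cadjb_neq0.
have steer_each k0 (v : 'cV_n) : exists F, cl_trans A b c F k0 (n * n + n) *m v = 0.
  by have [F] := steer_state cadjb_neq0 k0 v ctrl obs; rewrite cl_stateE; exists F.
have block k0 : exists F, cl_trans A b c F k0 (n ^ 4 + n ^ 3 + n ^ 2) = 0.
  have [F F0] := steer_all steer_each k0; exists F.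
  rewrite -[LHS]mulmx1; apply: cl_trans_eq0_le (_ : n * (n * n + n) <= _)%N _.
    by rewrite mulnDr !expnS expn0 !muln1 -addnA leq_addl.
  by rewrite mulmx1.
have [F F0] := cl_trans_glue block.
by exists F => k0 x0; rewrite cl_stateE F0 mul0mx.
Qed.
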